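(* Let $V$ be a vector configuration with $\mathrm{DD}(V)>0$. Then there is a subconfiguration $W\subseteq V$ of rank $1$ with $\operatorname{lin}(W)\cap V=W$ and $\mathrm{DD}(W)>0$ such that $\mathrm{DD}(V)=\mathrm{DD}(W)+\mathrm{DD}(V/W)$.
   Context: A vector configuration is a finite family (repetitions allowed) $U$ of vectors in a real vector space $E$; a subconfiguration is a subfamily, $\operatorname{rank}(U)=\dim\operatorname{lin}(U)$, cardinalities count multiplicities; $\operatorname{lin}(W)\cap V=W$ means the elements of $V$ lying in $\operatorname{lin}(W)$ are exactly those of $W$. The quotient $V/W$ is the configuration in $E/\operatorname{lin}(W)$ of the images of the elements of $V\setminus W$. Covector discrepancy: $\mathrm{DD}(U)=\max_f\big|\,|\{u\in U: f(u)>0\}|-|\{u\in U:f(u)<0\}|\,\big|$ over all linear functionals $f$ on $E$. *)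

From HB Require Import structures.
From mathcomp Require Import all_boot all_order all_algebra.
From mathcomp Require Import boolp reals.

Set Implicit Arguments.
Unset Strict Implicit.
Unset Printing Implicit Defensive.
Import Order.TTheory GRing.Theory Num.Theory.
Local Open Scope ring_scope.

Section VectorConfigurations.
Variables (R : realType) (E : lmodType R).

(* A vector configuration is a finite family (with repetitions): a [seq E].
   Subconfigurations are given by a mask [m : bitseq] (same size as V). *)

Definition in_lin (S : seq E) (x : E) : Prop :=
  exists c : 'I_(size S) -> R, x = \sum_(i < size S) c i *: S`_i.

Definition rank1 (S : seq E) : Prop :=
  exists w : E, w != 0 /\ forall x, in_lin S x <-> exists a : R, x = a *: w.

Definition npos (f : E -> R) (S : seq E) : nat := count (fun u => 0 < f u) S.
Definition nneg (f : E -> R) (S : seq E) : nat := count (fun u => f u < 0) S.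

Definition disc (f : E -> R) (S : seq E) : nat :=
  `|(npos f S)%:Z - (nneg f S)%:Z|%N.

(* Covector discrepancy DD(S) = max over linear functionals f on E of disc f S.
   (Every such value is <= size S, and f = 0 gives 0, so the max exists.) *)
Definition DD (S : seq E) : nat :=
  \max_(k < (size S).+1 | `[< exists f : {linear E -> R^o}, disc f S = k >]) k.

Definition cfg_compl (m : bitseq) (V : seq E) : seq E := mask (map negb m) V.

(* DD(V/W): linear functionals on E / lin(W) are exactly the linear functionals
   on E vanishing on lin(W); V/W consists of the images of the elements of V\W. *)
Definition DD_quot (V : seq E) (m : bitseq) : nat :=
  \max_(k < (size V).+1 | `[< exists f : {linear E -> R^o},
        (forall x, in_lin (mask m V) x -> f x = 0) /\
        disc f (cfg_compl m V) = k >]) k.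

End VectorConfigurations.

(* DD(V) is the maximum over linear functionals f of the signed count
   sum_(v in V) sgz (f v).  Perturbing g by a small multiple of h shows
   DD(V) >= sum_V sgz g + DD(V /\ ker g) for every g; call g tight when equality
   holds.  For W = lin(w) /\ V this yields DD(V) >= DD(W) + DD(V/W), and a tight
   g whose zeros in V are exactly W gives the reverse inequality.
   Such a g is found by induction on |V|.  Take an optimal f vanishing only at 0,
   a line L = lin(u) on which f has positive signed count, and k vanishing on V
   exactly along L.  Walking down the pencil k + l f from l = +oo, tightness
   persists past every slope -k(v)/f(v) at which the zero set has discrepancy 0;
   since the zero set at l = 0 is L /\ V, of positive discrepancy, we stop at
   some l >= 0 where k + l f is tight with a zero set of positive discrepancy.
   For l = 0 that zero set is L /\ V; otherwise it misses u and the induction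
   hypothesis applies to it.  Functionals on an arbitrary vector space come from
   Zorn's lemma. *)

From HB Require Import structures.
From mathcomp Require Import all_boot all_order all_algebra.
From mathcomp Require Import boolp reals classical_sets zify lra.
Set Implicit Arguments.
Unset Strict Implicit.
Unset Printing Implicit Defensive.
Import Order.TTheory GRing.Theory Num.Theory.
Local Open Scope ring_scope.

Lemma leq_bigmax_ord (Q : nat -> Prop) n k :
  (k <= n)%N -> Q k -> (k <= \max_(i < n.+1 | `[< Q i >]) i)%N.
Proof.
move=> kn Qk; rewrite -ltnS in kn.
by apply: (@leq_bigmax_cond _ _ val (Ordinal kn)); apply/asboolP.
Qed.

Lemma bigmax_ordP (Q : nat -> Prop) n : Q 0%N -> Q (\max_(i < n.+1 | `[< Q i >]) i).
Proof.
move=> Q0; have [|i /asboolP Qi ->] := @eq_bigmax_cond _ (fun i : 'I_n.+1 => `[< Q i >]) val.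
  by apply/card_gt0P; exists ord0; apply/asboolP.
exact: Qi.
Qed.

Lemma size_filter_lt (T : eqType) (p : pred T) (s : seq T) x :
  x \in s -> ~~ p x -> (size (filter p s) < size s)%N.
Proof.
move=> xs px; rewrite size_filter -(count_predC p s) -{1}[count p s]addn0 ltn_add2l.
by rewrite -has_count; apply/hasP; exists x.
Qed.

Lemma seq_extremum (T : eqType) (r : rel T) (s : seq T) (P : pred T) :
  total r -> transitive r -> has P s ->
  exists x, [/\ x \in s, P x & {in s, forall y, P y -> r x y}].
Proof.
move=> r_total r_trans; elim: s => [//|y s IH] /= Pys.
have ryy : r y y by have := r_total y y; rewrite orbb.
have [/IH[x [xs Px xmin]]|Ps] := boolP (has P s); last first.
  have Py : P y by move: Pys; rewrite (negbTE Ps) orbF.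
  exists y; split; rewrite ?mem_head // => z /predU1P[-> //|zs Pz].
  by move/hasPn: Ps => /(_ z zs); rewrite Pz.
have [/andP[Py ryx]|] := boolP (P y && r y x).
  exists y; split; rewrite ?mem_head // => z /predU1P[-> //|zs Pz].
  exact: r_trans ryx (xmin z zs Pz).
rewrite negb_and => yx; exists x; split; rewrite ?inE ?xs ?orbT // => z /predU1P[->|zs]; last exact: xmin.
by case: (P y) yx => //= /negbTE ryx _; have := r_total x y; rewrite ryx orbF.
Qed.

Section LinearOf.
Variables (R : realType) (E : lmodType R) (k : E -> R^o) (k_linear : linear k).

Definition lfun_of : E -> R^o := k.
HB.instance Definition _ := GRing.isLinear.Build R E R^o *:%R lfun_of k_linear.
Definition linear_of : {linear E -> R^o} := lfun_of.

Lemma linear_ofE x : linear_of x = k x. Proof. by []. Qed.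

End LinearOf.

Section Colinear.
Variables (R : realType) (E : lmodType R).

Definition multiple_of (w v : E) : bool := `[< exists a : R, v = a *: w >].

Lemma multiple_ofP w v : reflect (exists a : R, v = a *: w) (multiple_of w v).
Proof. exact: asboolP. Qed.

Lemma multiple_of_refl w : multiple_of w w.
Proof. by apply/multiple_ofP; exists 1; rewrite scale1r. Qed.

Lemma multiple_of0 v : multiple_of 0 v = (v == 0).
Proof.
apply/multiple_ofP/eqP => [[a ->]|->]; first by rewrite scaler0.
by exists 0; rewrite scaler0.
Qed.

Lemma multiple_of_linear0 (g : {linear E -> R^o}) w v :
  multiple_of w v -> g w = 0 -> g v = 0.
Proof. by move=> /multiple_ofP[a ->] gw; rewrite linearZ /= gw [_ *: _]mulr0. Qed.

Lemma multiple_of_independent u v x :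
  ~~ multiple_of v u -> multiple_of u x -> multiple_of v x -> x = 0.
Proof.
move=> vu /multiple_ofP[a ->] /multiple_ofP[b axb].
have [->|a0] := eqVneq a 0; first by rewrite scale0r.
case/negP: vu; apply/multiple_ofP; exists (a^-1 * b).
by rewrite -scalerA -axb scalerA mulVf // scale1r.
Qed.

End Colinear.

Section Extension.
Local Open Scope classical_set_scope.
Variables (R : realType) (E : lmodType R) (w z : E).
Hypothesis wz : ~~ multiple_of w z.

Definition linear_graph (Y : set (E * R)) :=
  (forall x a b, Y (x, a) -> Y (x, b) -> a = b) /\
  (forall x a y b c, Y (x, a) -> Y (y, b) -> Y (c *: x + y, c * a + b)).

Definition base_graph : set (E * R) :=
  [set p | exists a b : R, p = (a *: w + b *: z, b)].

Lemma linear_graph_base : linear_graph base_graph.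
Proof.
split=> [x a b [a1 [b1 [-> ->]]] [a2 [b2 []]] e ->|].
  apply/eqP; apply: contraNT wz => b12; apply/multiple_ofP.
  have e2 : (b1 - b2) *: z = (a2 - a1) *: w.
    by apply/eqP; rewrite !scalerBl subr_eq addrAC eq_sym subr_eq [X in _ == X]addrC e.
  exists ((b1 - b2)^-1 * (a2 - a1)).
  by rewrite -scalerA -e2 scalerA mulVf ?subr_eq0 // scale1r.
move=> x a y b c [a1 [b1 [-> ->]]] [a2 [b2 [-> ->]]].
exists (c * a1 + a2), (c * b1 + b2); congr (_, _).
by rewrite !scalerDl !scalerDr !scalerA addrACA.
Qed.

(* Zorn's lemma also quantifies over the empty chain, hence the base graph is
   adjoined to the graphs of the chain rather than required to lie in them. *)
Let admissible Y := linear_graph (base_graph `|` Y).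

Lemma admissible_chain (F : set (set (E * R))) :
  F `<=` admissible -> total_on F subset -> admissible (\bigcup_(X in F) X).
Proof.
move=> FA Ftot; set U := base_graph `|` \bigcup_(X in F) X.
have common p1 p2 : U p1 -> U p2 ->
    exists Y, [/\ linear_graph Y, Y p1, Y p2 & Y `<=` U].
  have sub X : F X -> base_graph `|` X `<=` U.
    by move=> FX t [?|?]; [left|right; exists X].
  case=> [h1|[X1 F1 h1]] [h2|[X2 F2 h2]].
  - by exists base_graph; split=> //; [exact: linear_graph_base|move=> t; left].
  - by exists (base_graph `|` X2); split=> //; [exact: FA|left|right|exact: sub].
  - by exists (base_graph `|` X1); split=> //; [exact: FA|right|left|exact: sub].
  - have [s12|s21] := Ftot _ _ F1 F2.
    + by exists (base_graph `|` X2); split=> //; [exact: FA|right; exact: s12|right|exact: sub].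
    + by exists (base_graph `|` X1); split=> //; [exact: FA|right|right; exact: s21|exact: sub].
split=> [x a b h1 h2|x a y b c h1 h2].
  by have [Y [[fY _] y1 y2 _]] := common _ _ h1 h2; exact: fY y1 y2.
by have [Y [[_ cY] y1 y2 YU]] := common _ _ h1 h2; exact/YU/cY.
Qed.

Definition graph_extension (Y : set (E * R)) x : set (E * R) :=
  [set p | exists q c, Y q /\ p = (q.1 + c *: x, q.2)].

Lemma linear_graph_extension Y x : linear_graph Y -> Y (0, 0) ->
  ~ (exists a, Y (x, a)) -> linear_graph (graph_extension Y x).
Proof.
move=> [fY cY] Y00 nx; split; last first.
  move=> y a y' b c [[q1 q2] [c1 [Yq [-> ->]]]] [[q1' q2'] [c2 [Yq' [-> ->]]]].
  exists (c *: q1 + q1', c * q2 + q2'), (c * c1 + c2); split; first exact: cY.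
  by congr (_, _); rewrite /= scalerDr scalerDl scalerA addrACA.
move=> y a b [[q1 q2] [c [Yq [-> ->]]]] [[q1' q2'] [c' [Yq' []]]] /= e ->.
have cc : c = c'.
  apply: contrapT => /eqP cc; apply: nx; exists ((c - c')^-1 * (q2' - q2)).
  have Yd : Y (q1' - q1, q2' - q2).
    by have := cY _ _ _ _ (-1) Yq Yq'; rewrite !scaleN1r mulN1r addrC [_ + q2']addrC.
  have -> : x = (c - c')^-1 *: (q1' - q1) + 0.
    apply: (scalerI (_ : c - c' != 0)); first by rewrite subr_eq0.
    rewrite addr0 scalerA mulfV ?subr_eq0 // scale1r scalerBl.
    by apply/eqP; rewrite subr_eq addrAC eq_sym subr_eq -e addrC.
  by rewrite -[_ * _]addr0; exact: cY.
subst c'; have q11 : q1 = q1' by apply: (addIr (c *: x)).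
by subst q1'; exact: fY Yq Yq'.
Qed.

Lemma exists_linear_separating : exists k : {linear E -> R^o}, k w = 0 /\ k z = 1.
Proof.
have [A [AA maxA]] := Zorn_bigcup admissible_chain.
have baseA : base_graph `<=` A.
  move=> p bp; apply: contrapT => Ap; apply: (maxA (base_graph `|` A)).
    by split=> [t|/(_ p (or_introl bp))//]; right.
  by rewrite /admissible setUA setUid.
have [fA cA] : linear_graph A.
  suff -> : A = base_graph `|` A by [].
  by apply/seteqP; split=> t; [right|case=> //; exact: baseA].
have A00 : A (0, 0) by apply: baseA; exists 0, 0; rewrite !scale0r addr0.
have total x : exists a, A (x, a).
  apply: contrapT => nx; apply: (maxA (graph_extension A x)).
    split=> [[y b] Ay|/(_ (x, 0)) h]; first by exists (y, b), 0; rewrite scale0r addr0.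
    by apply: nx; exists 0; apply: h; exists (0, 0), 1; rewrite add0r scale1r.
  suff -> : admissible (graph_extension A x) = linear_graph (graph_extension A x).
    exact: linear_graph_extension.
  congr linear_graph; apply/seteqP; split=> [[y b] [/baseA Ay|//]|t]; last by right.
  by exists (y, b), 0; rewrite scale0r addr0.
pose k x := projT1 (cid (total x)).
have Ak x : A (x, k x) by rewrite /k; case: cid.
have k_linear : linear (k : E -> R^o).
  by move=> c x y; apply: fA (Ak _) (cA _ _ _ _ c (Ak x) (Ak y)).
exists (linear_of k_linear); rewrite !linear_ofE; split.
  by apply: fA (Ak _) _; apply: baseA; exists 1, 0; rewrite scale1r scale0r addr0.
by apply: fA (Ak _) _; apply: baseA; exists 0, 1; rewrite scale1r scale0r add0r.
Qed.

End Extension.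

Section SignedCount.
Variables (R : realType) (E : lmodType R).
Implicit Types (S V : seq E) (f g h : E -> R^o).

Definition signed_count f S : int := \sum_(v <- S) sgz (f v).
Definition zeros f S := [seq v <- S | f v == 0].

Lemma signed_count_cons f v S : signed_count f (v :: S) = sgz (f v) + signed_count f S.
Proof. exact: big_cons. Qed.

Lemma npos_sub_nneg f S : (npos f S)%:Z - (nneg f S)%:Z = signed_count f S.
Proof.
elim: S => [|v S IH]; first by rewrite /signed_count big_nil.
rewrite signed_count_cons -IH /npos /nneg /= !PoszD.
by case: (sgzP (f v)) => _ /=; lia.
Qed.

Lemma disc_signed_count f S : disc f S = `|signed_count f S|%N.
Proof. by rewrite /disc npos_sub_nneg. Qed.

Lemma signed_count_le_size f S : (`|signed_count f S| <= size S)%N.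
Proof.
rewrite -lez_nat abszE; elim: S => [|v S IH]; first by rewrite /signed_count big_nil.
rewrite signed_count_cons /= -addn1 PoszD addrC.
by apply: le_trans (ler_normD _ _) _; rewrite lerD // normr_sgz lez_nat leq_b1.
Qed.

Lemma signed_countZ (c : R) f S : signed_count (c \*: f) S = sgz c * signed_count f S.
Proof. by rewrite /signed_count mulr_sumr; apply: eq_bigr => v _; rewrite /= sgzM. Qed.

Lemma signed_count_normalize f S :
  signed_count ((sgz (signed_count f S))%:~R \*: f) S = (disc f S)%:Z.
Proof. by rewrite signed_countZ sgz_int sgz_id disc_signed_count abszEsg. Qed.

Lemma signed_count_filter (p : pred E) f S :
  signed_count f S = signed_count f (filter p S) + signed_count f (filter (predC p) S).
Proof. by rewrite /signed_count !big_filter (bigID p). Qed.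

Lemma signed_count_vanishing f S : {in S, forall v, f v = 0} -> signed_count f S = 0.
Proof. by move=> f0; rewrite /signed_count big_seq big1 // => v /f0 ->; rewrite sgz0. Qed.

Lemma disc_le_DD (f : {linear E -> R^o}) S : (disc f S <= DD S)%N.
Proof.
apply: (@leq_bigmax_ord (fun k => exists f : {linear E -> R^o}, disc f S = k)); last by exists f.
by rewrite disc_signed_count signed_count_le_size.
Qed.

Lemma signed_count_le_DD (f : {linear E -> R^o}) S : signed_count f S <= (DD S)%:Z.
Proof.
by apply: le_trans (ler_norm _) _; rewrite -abszE lez_nat -disc_signed_count disc_le_DD.
Qed.

Lemma DD_attained S : exists f : {linear E -> R^o}, signed_count f S = (DD S)%:Z.
Proof.
have [|f fS] := @bigmax_ordP (fun k => exists f : {linear E -> R^o}, disc f S = k) (size S).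
  by exists \0; rewrite disc_signed_count signed_count_vanishing.
by exists ((sgz (signed_count f S))%:~R \*: f); rewrite signed_count_normalize fS.
Qed.

Lemma sgz_addr_small (a b : R) : `|b| < `|a| -> sgz (a + b) = sgz a.
Proof.
rewrite ltr_norml; case: (sgzP a) => [->|a0|a0] /andP[b1 b2]; first by exfalso; lra.
  by rewrite gtr0_sgz //; lra.
by rewrite ltr0_sgz //; lra.
Qed.

Lemma sgz_perturb_small f h S : exists2 e : R, 0 < e & forall e', 0 < e' -> e' <= e ->
  {in S, forall v, sgz (f v + e' * h v) = if f v == 0 then sgz (h v) else sgz (f v)}.
Proof.
elim: S => [|v S [e0 e00 IH]]; first by exists 1.
have hv1 : 0 < `|h v| + 1 by rewrite ltr_wpDl.
pose d := if f v == 0 then 1 else `|f v| / (`|h v| + 1).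
have d0 : 0 < d by rewrite /d; case: eqP => // /eqP fv; rewrite divr_gt0 ?normr_gt0.
exists (Num.min e0 d) => [|e' e'0]; first by rewrite lt_min e00.
rewrite le_min => /andP[e'e0 e'd] u /predU1P[->|]; last exact: IH.
case: eqP => [->|/eqP fv]; first by rewrite add0r sgzM gtr0_sgz ?mul1r.
apply: sgz_addr_small; rewrite normrM (gtr0_norm e'0).
apply: (@lt_le_trans _ _ (e' * (`|h v| + 1))); first by rewrite mulrDr mulr1 ltrDl.
by rewrite -ler_pdivlMr // (_ : _ / _ = d) // /d (negbTE fv).
Qed.

Lemma signed_count_perturb f h S : exists e : R,
  signed_count (f \+ e \*: h) S = signed_count f S + signed_count h (zeros f S) /\
  {in S, forall v, ((f \+ e \*: h) v == 0) = (f v == 0) && (h v == 0)}.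
Proof.
have [e e0 fhS] := sgz_perturb_small f h S; exists e.
have {}fhS : {in S, forall v, sgz ((f \+ e \*: h) v) =
    if f v == 0 then sgz (h v) else sgz (f v)} by exact: fhS.
split=> [|v vS].
  rewrite /signed_count big_filter [X in _ + X]big_mkcond -big_split /= !big_seq.
  by apply: eq_bigr => v /fhS ->; case: eqP => [->|]; rewrite ?sgz0 ?add0r ?addr0.
rewrite -sgz_eq0 fhS //.
by case: (f v =P 0) => [_|/eqP fv]; rewrite sgz_eq0 ?(negbTE fv).
Qed.

End SignedCount.

Section Generic.
Variables (R : realType) (E : lmodType R).
Implicit Types (S V : seq E) (f g h k : {linear E -> R^o}).

Lemma signed_count_zeros_le_DD g V :
  signed_count g V + (DD (zeros g V))%:Z <= (DD V)%:Z.
Proof.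
have [h <-] := DD_attained (zeros g V).
have [e [<- _]] := signed_count_perturb g h V.
exact: signed_count_le_DD.
Qed.

Lemma exists_kernel_line u S :
  exists k, k u = 0 /\ {in S, forall v, (k v == 0) = multiple_of u v}.
Proof.
suff [k [ku kS]] : exists k, k u = 0 /\ {in S, forall v, ~~ multiple_of u v -> k v != 0}.
  exists k; split=> // v vS; have [uv|uv] := boolP (multiple_of u v).
    by rewrite (multiple_of_linear0 uv ku) eqxx.
  exact/negbTE/kS.
elim: S => [|v S [k [ku kS]]]; first by exists \0.
have [uv|] := boolP (multiple_of u v || (k v != 0)).
  exists k; split=> // x /predU1P[->|/kS//] ux.
  by move: uv; rewrite (negbTE ux).
rewrite negb_or negbK => /andP[uv /eqP kv].
have [k' [k'u k'v]] := exists_linear_separating uv.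
have [e [_ kk'0]] := signed_count_perturb k k' (v :: S).
exists (k \+ e \*: k'); split=> [|x xvS ux]; first by rewrite /= ku k'u scaler0 addr0.
rewrite kk'0 // negb_and; case/predU1P: xvS => [->|/kS->//].
by rewrite k'v oner_eq0 orbT.
Qed.

(* Add a small multiple of a functional vanishing on S exactly along w: by
   optimality of g, in either direction, it does not change the signed count. *)
Lemma generic_optimum w S g : g w = 0 ->
  (forall g', g' w = 0 -> signed_count g' S <= signed_count g S) ->
  exists g', [/\ g' w = 0, signed_count g' S = signed_count g S &
                 {in S, forall v, (g' v == 0) = multiple_of w v}].
Proof.
move=> gw gopt; have [k [kw kS]] := exists_kernel_line w S.
have [e [gke gk0]] := signed_count_perturb g k S.
have [e' [gke' _]] := signed_count_perturb g ((-1) \*: k) S.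
have up := gopt (g \+ e \*: k); have down := gopt (g \+ e' \*: ((-1) \*: k)).
rewrite gke /= gw kw scaler0 addr0 in up.
rewrite gke' signed_countZ sgzN1 /= gw kw !scaler0 addr0 in down.
have {up down} kZ : signed_count k (zeros g S) = 0.
  by move: (up erefl) (down erefl); lra.
exists (g \+ e \*: k); split; first by rewrite /= gw kw scaler0 addr0.
  by rewrite gke kZ addr0.
move=> v vS; rewrite gk0 // kS //; case: (boolP (multiple_of w v)) => wv.
  by rewrite (multiple_of_linear0 wv gw) eqxx.
by rewrite andbF.
Qed.

Lemma exists_line_positive f S : 0 < signed_count f S ->
  exists u, [/\ u \in S, u != 0 & 0 < signed_count f (filter (multiple_of u) S)].
Proof.
have [n] := ubnP (size S); elim: n S => // n IH S /ltnSE sizeS fS.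
have [v vS fv] : exists2 v, v \in S & f v != 0.
  apply/hasP; apply: contraTT fS => /hasPn f0; rewrite -leNgt.
  by rewrite signed_count_vanishing // => v /f0; rewrite negbK => /eqP.
have v0 : v != 0 by apply: contraNneq fv => ->; rewrite linear0.
have [fvS|fvS] := ltP 0 (signed_count f (filter (multiple_of v) S)); first by exists v.
set S' := filter (predC (multiple_of v)) S.
have fS' : 0 < signed_count f S'.
  by move: fS; rewrite (signed_count_filter (multiple_of v)) -/S'; lra.
have sizeS' : (size S' < n)%N.
  by apply: leq_trans sizeS; apply: size_filter_lt vS _; rewrite /= multiple_of_refl.
have [u [uS' u0 fu]] := IH S' sizeS' fS'.
move: uS'; rewrite mem_filter /= => /andP[vu uS]; exists u; split=> //.
(* Only the zero vector lies on both lines, and it does not count. *)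
rewrite (signed_count_filter (multiple_of v)) signed_count_vanishing ?add0r; last first.
  move=> x; rewrite !mem_filter => /andP[vx /andP[ux _]].
  by rewrite (multiple_of_independent vu ux vx) linear0.
suff -> : filter (predC (multiple_of v)) (filter (multiple_of u) S) = filter (multiple_of u) S' by [].
by rewrite /S' -!filter_predI; apply: eq_filter => x /=; rewrite andbC.
Qed.

Definition tight (g : E -> R^o) V :=
  signed_count g V + (DD (zeros g V))%:Z = (DD V)%:Z.

Lemma tight_compose G g V : tight G V -> tight g (zeros G V) ->
  exists e : R, tight (G \+ e \*: g) V /\
                zeros (G \+ e \*: g) V = zeros g (zeros G V).
Proof.
move=> tG tg; have [e [Gg Gg0]] := signed_count_perturb G g V.
have zGg : zeros (G \+ e \*: g) V = zeros g (zeros G V).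
  by rewrite /zeros -filter_predI; apply: eq_in_filter => v vV; rewrite Gg0 // andbC.
by exists e; split=> //; rewrite /tight Gg zGg -addrA tg.
Qed.

End Generic.

Section WeightedPoints.
Variables (R : realType) (T : eqType) (s : seq T) (p : T -> R) (c : T -> int).

Definition weight_above (x : R) := \sum_(t <- s | x < p t) c t.
Definition weight_at (x : R) := \sum_(t <- s | p t == x) c t.

(* Descend from the top through the positions: as long as the weight at the
   current position vanishes, the weight above the next lower position
   vanishes as well. *)
Lemma exists_balanced_position : 0 < weight_at 0 ->
  (forall x, 0 <= x -> weight_above x = 0 -> 0 <= weight_at x) ->
  exists x, [/\ 0 <= x, weight_above x = 0 & 0 < weight_at x].
Proof.
move=> at0 at_ge0; pose C := 0 :: map p s.
have C0 : 0 \in C by rewrite mem_head.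
have pC t : t \in s -> p t \in C by move=> ts; rewrite inE map_f ?orbT.
have ge_total : total (fun x y : R => y <= x) by move=> x y; rewrite orbC le_total.
have ge_trans : transitive (fun x y : R => y <= x) by move=> x y z yx zy; exact: le_trans zy yx.
have hasC : has predT C by apply/hasP; exists 0.
have [top [topC _ topmax]] := seq_extremum ge_total ge_trans hasC.
have top_bal : has (fun x => (0 <= x) && (weight_above x == 0)) C.
  apply/hasP; exists top => //; rewrite (topmax 0 C0) //=.
  rewrite /weight_above big_seq_cond big1 // => t /andP[ts]; rewrite ltNge.
  by rewrite topmax ?pC.
have [x0 [x0C /andP[x00 /eqP x0bal] x0min]] := seq_extremum le_total le_trans top_bal.
exists x0; split => //; rewrite lt_def at_ge0 // andbT; apply/eqP => x0at.
have [x00'|x0pos] := eqVneq x0 0; first by move: at0; rewrite -x00' x0at ltxx.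
have x0gt0 : 0 < x0 by rewrite lt_def x0pos.
have below_x0 : has (fun x => x < x0) C by apply/hasP; exists 0.
have [x1 [x1C x1x0 x1max]] := seq_extremum ge_total ge_trans below_x0.
have x10 : 0 <= x1 by exact: x1max.
suff x1bal : weight_above x1 = 0.
  by move: (x0min x1 x1C); rewrite x10 x1bal eqxx => /(_ isT); rewrite leNgt x1x0.
rewrite -x0bal -[weight_above x0]addr0 -x0at /weight_above /weight_at.
rewrite big_mkcond [in RHS]big_mkcond [X in _ + X]big_mkcond -big_split /= !big_seq.
apply: eq_bigr => t ts; case: (ltgtP x0 (p t)) => [x0t|tx0|<-].
- by rewrite (lt_trans x1x0 x0t) addr0.
- by rewrite ltNge (x1max _ (pC t ts) tx0) addr0.
- by rewrite x1x0 add0r.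
Qed.

End WeightedPoints.

Section Pencil.
Variables (R : realType) (E : lmodType R) (V : seq E) (f k : {linear E -> R^o}).
Hypothesis f0k0 : {in V, forall v, f v = 0 -> k v = 0}.
Hypothesis f_opt : signed_count f V = (DD V)%:Z.

(* [k + l f] vanishes at v exactly for l = slope v (any l when f v = 0, where
   the junk value of slope does not matter since sgz (f v) = 0). *)
Let slope v := - k v / f v.
Local Notation above := (weight_above V slope (fun v => sgz (f v))).
Local Notation at_ := (weight_at V slope (fun v => sgz (f v))).

Lemma pencil_slope (l : R) v : v \in V -> (k \+ l \*: f) v = (l - slope v) * f v.
Proof.
move=> vV; have [fv|fv] := eqVneq (f v) 0; first by rewrite /= fv f0k0 // scaler0 mulr0 addr0.
by rewrite /= mulrBl /slope divfK // opprK addrC.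
Qed.

Lemma signed_count_pencil (l : R) :
  signed_count (k \+ l \*: f) V = (DD V)%:Z - 2 * above l - at_ l.
Proof.
rewrite -f_opt /weight_above /weight_at /signed_count.
rewrite [X in _ - 2 * X]big_mkcond [X in _ - _ - X]big_mkcond mulr_sumr -!sumrB !big_seq.
apply: eq_bigr => v vV; rewrite pencil_slope // sgzM /=.
case: (ltgtP l (slope v)) => [lv|vl|->].
- by rewrite ltr0_sgz ?subr_lt0 //; lra.
- by rewrite gtr0_sgz ?subr_gt0 //; lra.
- by rewrite subrr sgz0; lra.
Qed.

Lemma signed_count_zeros_pencil (l : R) :
  signed_count f (zeros (k \+ l \*: f) V) = at_ l.
Proof.
rewrite /signed_count /zeros /weight_at big_filter big_mkcond [in RHS]big_mkcond !big_seq.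
apply: eq_bigr => v vV; rewrite pencil_slope //.
have [->|fv] := eqVneq (f v) 0; first by rewrite sgz0 !if_same.
by rewrite mulf_eq0 (negbTE fv) orbF subr_eq0 eq_sym.
Qed.

Lemma tight_pencil (l : R) : above l = 0 ->
  tight (k \+ l \*: f) V /\ (DD (zeros (k \+ l \*: f) V))%:Z = at_ l.
Proof.
move=> above0; have lower := signed_count_le_DD f (zeros (k \+ l \*: f) V).
have upper := signed_count_zeros_le_DD (k \+ l \*: f) V.
move: lower upper; rewrite /tight signed_count_zeros_pencil signed_count_pencil above0.
by move=> lo up; split; lra.
Qed.

Lemma exists_tight_pencil : 0 < signed_count f (zeros k V) ->
  exists l : R, tight (k \+ l \*: f) V /\ (0 < DD (zeros (k \+ l \*: f) V))%N.
Proof.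
move=> fk; have at0 : 0 < at_ 0.
  rewrite -signed_count_zeros_pencil; congr (0 < signed_count _ _): fk.
  by apply: eq_filter => v; rewrite /= scale0r addr0.
have at_ge0 x : 0 <= x -> above x = 0 -> 0 <= at_ x by move=> _ /tight_pencil[_ <-].
have [l [_ /tight_pencil[tl DDl] atl]] := exists_balanced_position at0 at_ge0.
by exists l; rewrite -ltz_nat DDl.
Qed.

End Pencil.

Section TightLine.
Variables (R : realType) (E : lmodType R).

Lemma exists_tight_step (V : seq E) : (0 < DD V)%N ->
  exists (g : {linear E -> R^o}) u, [/\ u \in V, u != 0, tight g V,
    (0 < DD (zeros g V))%N & zeros g V = filter (multiple_of u) V \/ g u != 0].
Proof.
move=> DDpos; have [f0 f0opt] := DD_attained V.
have f0max (g : {linear E -> R^o}) : g 0 = 0 -> signed_count g V <= signed_count f0 V.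
  by rewrite f0opt => _; exact: signed_count_le_DD.
have [f [_ fopt fgen]] := generic_optimum (linear0 f0) f0max.
rewrite f0opt in fopt.
have fpos : 0 < signed_count f V by rewrite fopt ltz_nat.
have [u [uV u0 fu]] := exists_line_positive fpos.
have [k [ku kV]] := exists_kernel_line u V.
have zk : zeros k V = filter (multiple_of u) V by apply: eq_in_filter.
have f0k0 : {in V, forall v, f v = 0 -> k v = 0}.
  by move=> v vV /eqP; rewrite fgen // multiple_of0 => /eqP ->; rewrite linear0.
rewrite -zk in fu; have [l [tG DDG]] := exists_tight_pencil f0k0 fopt fu.
exists (k \+ l \*: f), u; split=> //; have [->|l0] := eqVneq l 0.
  by left; rewrite -zk; apply: eq_filter => v; rewrite /= scale0r addr0.
by right; rewrite /= ku add0r mulf_neq0 // fgen ?multiple_of0.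
Qed.

Lemma exists_tight_line (V : seq E) : (0 < DD V)%N ->
  exists (g : {linear E -> R^o}) w, [/\ w \in V, w != 0, tight g V,
    zeros g V = filter (multiple_of w) V & (0 < DD (zeros g V))%N].
Proof.
have [n] := ubnP (size V); elim: n V => // n IH V /ltnSE sizeV DDpos.
have [G [u [uV u0 tG DDG [zG|Gu]]]] := exists_tight_step DDpos; first by exists G, u.
have sizeZ : (size (zeros G V) < n)%N.
  exact: leq_trans (size_filter_lt (p := fun v => G v == 0) uV Gu) sizeV.
have [g [w [wZ w0 tg zg DDg]]] := IH _ sizeZ DDG.
have [e [tGg zGg]] := tight_compose tG tg.
move: wZ; rewrite mem_filter => /andP[/eqP Gw wV].
exists (G \+ e \*: g), w; rewrite zGg; split => //.
rewrite zg -filter_predI; apply: eq_filter => v /=.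
by case: (boolP (multiple_of w v)) => // wv; rewrite (multiple_of_linear0 wv Gw) eqxx.
Qed.

End TightLine.

Section Quotient.
Variables (R : realType) (E : lmodType R) (V : seq E) (m : bitseq).

Definition vanishes_on (g : {linear E -> R^o}) (S : seq E) :=
  forall x, in_lin S x -> g x = 0.

Lemma signed_count_le_DD_quot (g : {linear E -> R^o}) : vanishes_on g (mask m V) ->
  signed_count g (cfg_compl m V) <= (DD_quot V m)%:Z.
Proof.
move=> gW; apply: le_trans (ler_norm _) _; rewrite -abszE lez_nat -disc_signed_count.
apply: (@leq_bigmax_ord (fun k => exists f : {linear E -> R^o},
  vanishes_on f (mask m V) /\ disc f (cfg_compl m V) = k)); last by exists g.
rewrite disc_signed_count (leq_trans (signed_count_le_size _ _)) //.
exact/size_subseq/mask_subseq.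
Qed.

Lemma DD_quot_attained : exists g : {linear E -> R^o},
  vanishes_on g (mask m V) /\ signed_count g (cfg_compl m V) = (DD_quot V m)%:Z.
Proof.
have [|g [gW gd]] := @bigmax_ordP (fun k => exists f : {linear E -> R^o},
  vanishes_on f (mask m V) /\ disc f (cfg_compl m V) = k) (size V).
  by exists \0; split=> //; rewrite disc_signed_count signed_count_vanishing.
exists ((sgz (signed_count g (cfg_compl m V)))%:~R \*: g); split.
  by move=> x /gW /= ->; rewrite scaler0.
by rewrite signed_count_normalize gd.
Qed.

End Quotient.

Section LineQuotient.
Variables (R : realType) (E : lmodType R) (V : seq E) (w : E).
Hypothesis wV : w \in V.

Local Notation m := (map (multiple_of w) V).

Lemma mask_multiple_of : mask m V = filter (multiple_of w) V.
Proof. by rewrite filter_mask. Qed.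

Lemma cfg_compl_multiple_of : cfg_compl m V = filter (predC (multiple_of w)) V.
Proof. by rewrite /cfg_compl -map_comp filter_mask. Qed.

Lemma in_lin_multiple_of x : in_lin (mask m V) x <-> exists a : R, x = a *: w.
Proof.
rewrite mask_multiple_of; set W := filter _ V; split=> [[c ->]|[a ->]].
  apply: (big_ind (fun y => exists a : R, y = a *: w)).
  - by exists 0; rewrite scale0r.
  - by move=> _ _ [a1 ->] [a2 ->]; exists (a1 + a2); rewrite scalerDl.
  move=> i _; have : W`_i \in W by apply: mem_nth.
  by rewrite mem_filter => /andP[/multiple_ofP[b ->] _]; exists (c i * b); rewrite scalerA.
have wi : (index w W < size W)%N by rewrite index_mem mem_filter multiple_of_refl.
exists (fun i => if i == Ordinal wi then a else 0).
rewrite (bigD1 (Ordinal wi)) //= eqxx nth_index ?mem_filter ?multiple_of_refl //.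
by rewrite big1 ?addr0 // => i /negbTE->; rewrite scale0r.
Qed.

Lemma vanishes_on_line (g : {linear E -> R^o}) : vanishes_on g (mask m V) <-> g w = 0.
Proof.
split=> [|gw x /in_lin_multiple_of/multiple_ofP wx]; last exact: multiple_of_linear0 wx gw.
by apply; apply/in_lin_multiple_of; exists 1; rewrite scale1r.
Qed.

Lemma signed_count_off_line (g : {linear E -> R^o}) : g w = 0 ->
  signed_count g V = signed_count g (cfg_compl m V).
Proof.
move=> gw; rewrite cfg_compl_multiple_of (signed_count_filter (multiple_of w) g V).
rewrite signed_count_vanishing ?add0r // => v.
by rewrite mem_filter => /andP[wv _]; exact: multiple_of_linear0 wv gw.
Qed.

Lemma DD_line_add_quot_le : (DD (filter (multiple_of w) V) + DD_quot V m <= DD V)%N.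
Proof.
have [g1 [/vanishes_on_line g1w g1d]] := DD_quot_attained V m.
have g1max (g : {linear E -> R^o}) : g w = 0 ->
    signed_count g (cfg_compl m V) <= signed_count g1 (cfg_compl m V).
  by rewrite g1d => /vanishes_on_line; exact: signed_count_le_DD_quot.
have [g [gw gd gV]] := generic_optimum g1w g1max.
have zg : zeros g V = filter (multiple_of w) V.
  apply: eq_in_filter => v vV; case: (boolP (multiple_of w v)) => [wv|nwv].
    by rewrite (multiple_of_linear0 wv gw) eqxx.
  by rewrite gV ?(negbTE nwv) // cfg_compl_multiple_of mem_filter /= nwv.
have := signed_count_zeros_le_DD g V.
by rewrite zg signed_count_off_line // gd g1d -lez_nat PoszD addrC.
Qed.

End LineQuotient.

Theorem mainTheorem14 (R : realType) (E : lmodType R) (V : seq E) :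
  (0 < DD V)%N ->
  exists m : bitseq,
    [/\ size m = size V,
        rank1 (mask m V),
        (forall i, (i < size V)%N -> (in_lin (mask m V) V`_i <-> nth false m i)),
        (0 < DD (mask m V))%N
      & DD V = (DD (mask m V) + DD_quot V m)%N].
Proof.
move=> DDpos; have [g [w [wV w0 tg zg DDW]]] := exists_tight_line DDpos.
exists (map (multiple_of w) V); rewrite mask_multiple_of; split.
- by rewrite size_map.
- by exists w; split=> // x; rewrite -mask_multiple_of; exact: in_lin_multiple_of.
- move=> i iV; rewrite -mask_multiple_of in_lin_multiple_of // (nth_map 0) //.
  by split=> /multiple_ofP.
- by rewrite -zg.
have : w \in zeros g V by rewrite zg mem_filter multiple_of_refl.
rewrite mem_filter => /andP[/eqP gw _].
apply/eqP; rewrite eqn_leq DD_line_add_quot_le // andbT -lez_nat -tg zg PoszD addrC lerD2l.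
by rewrite (signed_count_off_line V gw); apply/signed_count_le_DD_quot/vanishes_on_line.
Qed.
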